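(* For all integers $p\ge4$, $d\ge2$ and $n\ge2$, $$p\,n\,N_{d,n}<(d^{p-1}-d^{\lfloor p/2\rfloor})(d^{p-1}-1)^{n-1},$$ where $N_{d,n}=\binom{d+n}{n}-n-1$. *)

From mathcomp Require Import all_boot.
Set Implicit Arguments. Unset Strict Implicit. Unset Printing Implicit Defensive.

(* N_{d,n} = binom(d+n, n) - n - 1  (nonnegative: binom(d+n,n) >= n+1 for d>=1) *)
Definition Ndn (d n : nat) : nat := 'C(d + n, n) - n - 1.

From mathcomp Require Import all_boot.
From mathcomp Require Import zify.

(* Write D = d^(p-1).  From (n+1) C(d+n+1, n+1) = (d+n+1) C(d+n, n) and
   C(d+n, n) <= 2 N_{d,n} one gets (n+1) N_{d,n+1} <= (D-1) n N_{d,n}, so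
   p n N_{d,n} grows at most geometrically with ratio D-1 and it suffices to
   check n = 2, where 2 N_{d,2} = (d+4)(d-1) and d^(p/2) <= D/d. *)

Lemma double_bin2 (m : nat) : 2 * 'C(m, 2) = m * m.-1.
Proof. by rewrite -mul_bin_diag bin1. Qed.

Lemma double_Ndn2 (d : nat) : 1 <= d -> 2 * Ndn d 2 = (d + 4) * (d - 1).
Proof. by rewrite /Ndn mulnBr mulnBr double_bin2 addn2 /=; nia. Qed.

Lemma double_succ_le_bin (d n : nat) :
  2 <= d -> 2 <= n -> 2 * n.+1 <= 'C(d + n, n).
Proof.
move=> d2 n2; apply: (@leq_trans 'C(n.+2, 2)); last first.
  by rewrite -bin_sub // subn2 /= leq_bin2l // -addn2 addnC leq_add2r.
by rewrite -(leq_pmul2l (_ : 0 < 2)) // double_bin2 /=; nia.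
Qed.

Lemma Ndn_succ_le (d n M : nat) : 2 <= d -> 2 <= n -> d + 3 <= M ->
  n.+1 * Ndn d n.+1 <= M * (n * Ndn d n).
Proof.
move=> d2 n2 dM; rewrite /Ndn.
have diag : n.+1 * 'C(d + n.+1, n.+1) = (d + n.+1) * 'C(d + n, n).
  by rewrite -mul_bin_diag addnS.
have C_le : 'C(d + n, n) <= 2 * ('C(d + n, n) - n - 1).
  by have := double_succ_le_bin d n d2 n2; lia.
have coef_le : 2 * (d + n.+1) <= M * n by nia.
apply: (@leq_trans (n.+1 * 'C(d + n.+1, n.+1))).
  by rewrite leq_mul2l -subnDA leq_subr orbT.
rewrite diag mulnA.
apply: (@leq_trans ((d + n.+1) * (2 * ('C(d + n, n) - n - 1)))).
  by rewrite leq_mul2l C_le orbT.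
by rewrite mulnA [_ * 2]mulnC leq_mul2r coef_le orbT.
Qed.

Lemma geometric_bound (f : nat -> nat) (k M c : nat) : 0 < M ->
  (forall n, k <= n -> f n.+1 <= M * f n) -> f k < c ->
  forall n, k <= n -> f n < c * M ^ (n - k).
Proof.
move=> M_gt0 step fk n /subnKC <-; rewrite addKn.
elim: (n - k) => [|i IH]; first by rewrite addn0 muln1.
rewrite addnS expnS mulnCA; apply: leq_ltn_trans (step _ (leq_addr _ _)) _.
by rewrite ltn_pmul2l.
Qed.

Lemma expn_pred_mulB1_gt (p d : nat) : 4 <= p -> 2 <= d ->
  p * d * (d + 4) < d ^ (p - 1) * (d ^ (p - 1) - 1).
Proof.
move=> p4 d2.
have -> : d ^ (p - 1) = d ^ 3 * d ^ (p - 4).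
  by rewrite -expnD; congr (_ ^ _); lia.
have : (p - 4).+1 <= d ^ (p - 4) by exact: ltn_expl.
rewrite (_ : d ^ 3 = d * d * d); last by rewrite !expnS expn0 muln1 mulnA.
set t := d ^ (p - 4) => t_ge.
(* p <= 4 t, and 4 (d + 4) < d^2 (d^3 - 1) already holds for d = 2. *)
have d3 : 8 <= d * d * d by have := leq_mul (leq_mul d2 d2) d2.
nia.
Qed.

Lemma Ndn2_bound (p d : nat) : 4 <= p -> 2 <= d ->
  p * 2 * Ndn d 2 < (d ^ (p - 1) - d ^ p./2) * (d ^ (p - 1) - 1).
Proof.
move=> p4 d2; have key := expn_pred_mulB1_gt p d p4 d2.
have q_le : d ^ p./2 * d <= d ^ (p - 1).
  rewrite -expnSr leq_pexp2l ?(ltnW d2) //.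
  by have := odd_double_half p; rewrite -addnn; case: (odd p) => /=; lia.
set D := d ^ (p - 1) in key q_le *; set q := d ^ p./2 in q_le *.
rewrite -(ltn_pmul2r (ltnW d2)) -(mulnA p 2) double_Ndn2 ?(ltnW d2) //.
apply: (@leq_trans (D * (D - 1) * (d - 1))); first by nia.
have D_le : D * (d - 1) <= (D - q) * d by rewrite mulnBr mulnBl muln1; lia.
by rewrite mulnAC [(D - q) * _ * d]mulnAC leq_mul2r D_le orbT.
Qed.

Theorem lemma5p5 (p d n : nat) (hp : 4 <= p) (hd : 2 <= d) (hn : 2 <= n) :
  p * n * Ndn d n < (d ^ (p - 1) - d ^ (p./2)) * (d ^ (p - 1) - 1) ^ (n - 1).
Proof.
set M := d ^ (p - 1) - 1.
have M_ge : d + 3 <= M by have := expn_pred_mulB1_gt p d hp hd; nia.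
have M_gt0 : 0 < M by lia.
have step k : 2 <= k -> p * k.+1 * Ndn d k.+1 <= M * (p * k * Ndn d k).
  by move=> k2; rewrite -!mulnA [leqRHS]mulnCA leq_mul2l Ndn_succ_le ?orbT.
rewrite (_ : n - 1 = (n - 2).+1) ?expnS ?mulnA; last by lia.
exact: (geometric_bound (fun k => p * k * Ndn d k) 2 M _ M_gt0 step
  (Ndn2_bound p d hp hd) n hn).
Qed.
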